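(* Let $n\ge 1$ and $A\subseteq[n]$. Define the reverse complement $A^*=\{n+1-i : i\in[n]\setminus A\}$. Let $C_1=D_X(A)$ and $C_2=D_X(A^* )$. Then $C_2$ is exactly the set of orders obtained from the orders of $C_1$ by first reversing each order (replacing it by its dual) and then renaming each alternative $i$ as $n+1-i$.
   Context: Alternatives are $X=[n]=\{1,\dots,n\}$, with societal axis $1<2<\dots<n$. Linear orders are written as strings, leftmost alternative ranked highest. The dual (reverse) of a linear order $q$ is the order ranking $x$ above $y$ iff $q$ ranks $y$ above $x$. For $A\subseteq[n]$, the set-alternating domain $D_X(A)$ is the set of all linear orders $q$ on $[n]$ such that for every triple $i<j<k$ in $[n]$: if $j\in A$ then $i$ is not ranked last among $\{i,j,k\}$ in $q$ (never condition $1N3$), and if $j\notin A$ then $k$ is not ranked first among $\{i,j,k\}$ in $q$ (never condition $3N1$). *)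

From mathcomp Require Import all_boot all_fingroup.
Set Implicit Arguments. Unset Strict Implicit. Unset Printing Implicit Defensive.

(* Alternatives [n] = {1,...,n} are encoded by 'I_n: the ordinal k stands for
   alternative k+1, so the axis order 1<2<...<n is the order on 'I_n, and
   the map i |-> n+1-i is rev_ord.
   A linear order q on [n] is encoded by its rank permutation
   rank : {perm 'I_n}, rank x = position of x (0 = ranked highest);
   q ranks x above y iff rank x < rank y. *)

Definition above n (q : {perm 'I_n}) (x y : 'I_n) : bool := q x < q y.

Definition in_DX n (A : {set 'I_n}) (q : {perm 'I_n}) : Prop :=
  forall i j k : 'I_n, i < j -> j < k ->
    (j \in A -> ~ (above q j i /\ above q k i))   (* i not ranked last *)
  /\ (j \notin A -> ~ (above q k i /\ above q k j)). (* k not ranked first *)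

Definition dual_order n (q : {perm 'I_n}) : {perm 'I_n} :=
  (q * perm (@rev_ord_inj n))%g.

Definition rename_rev n (q : {perm 'I_n}) : {perm 'I_n} :=
  (perm (@rev_ord_inj n) * q)%g.

Definition rev_compl n (A : {set 'I_n}) : {set 'I_n} :=
  [set rev_ord i | i in ~: A].

From mathcomp Require Import all_boot all_fingroup.
From mathcomp Require Import zify.

Set Implicit Arguments.
Unset Strict Implicit.
Unset Printing Implicit Defensive.

(* The map q |-> rename_rev (dual_order q) is an involution on orders, and the
   image of q ranks x above y iff q ranks n+1-y above n+1-x.  It sends a
   triple i<j<k to the triple n+1-k < n+1-j < n+1-i and turns the ranking of
   the triple upside down, so "the smallest is not ranked last" becomes "the
   largest is not ranked first"; the middle element n+1-j lies in A^* iff j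
   lies outside A, which is exactly how the two never-conditions swap. *)

Definition dual_rev n (q : {perm 'I_n}) : {perm 'I_n} := rename_rev (dual_order q).

Lemma ltn_rev_ord n (i j : 'I_n) : (rev_ord i < rev_ord j) = (j < i).
Proof. by rewrite /=; have := ltn_ord i; have := ltn_ord j; lia. Qed.

Lemma mem_rev_compl n (A : {set 'I_n}) (j : 'I_n) :
  (j \in rev_compl A) = (rev_ord j \notin A).
Proof.
by rewrite -{1}(rev_ordK j) mem_imset ?inE //; apply: rev_ord_inj.
Qed.

Lemma rev_complK n : involutive (@rev_compl n).
Proof. by move=> A; apply/setP => j; rewrite !mem_rev_compl rev_ordK negbK. Qed.

Lemma dual_revE n (q : {perm 'I_n}) (x : 'I_n) :
  dual_rev q x = rev_ord (q (rev_ord x)).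
Proof. by rewrite /dual_rev /rename_rev /dual_order !permM !permE. Qed.

Lemma dual_revK n : involutive (@dual_rev n).
Proof. by move=> q; apply/permP => x; rewrite !dual_revE !rev_ordK. Qed.

Lemma above_dual_rev n (q : {perm 'I_n}) (x y : 'I_n) :
  above (dual_rev q) x y = above q (rev_ord y) (rev_ord x).
Proof. by rewrite /above !dual_revE ltn_rev_ord. Qed.

Lemma in_DX_dual_rev n (A : {set 'I_n}) (q : {perm 'I_n}) :
  in_DX A q -> in_DX (rev_compl A) (dual_rev q).
Proof.
move=> DXq i j k lt_ij lt_jk.
have lt_kj : rev_ord k < rev_ord j by rewrite ltn_rev_ord.
have lt_ji : rev_ord j < rev_ord i by rewrite ltn_rev_ord.
have [never1N3 never3N1] := DXq _ _ _ lt_kj lt_ji.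
rewrite !above_dual_rev mem_rev_compl negbK.
by split=> [/never3N1 | /never1N3] never [? ?]; apply: never.
Qed.

Lemma in_DX_dual_revE n (A : {set 'I_n}) (q : {perm 'I_n}) :
  in_DX (rev_compl A) (dual_rev q) <-> in_DX A q.
Proof.
split; last exact: in_DX_dual_rev.
by rewrite -{2}(rev_complK A) -{2}(dual_revK q); apply: in_DX_dual_rev.
Qed.

Theorem lemma1 (n : nat) (A : {set 'I_n}) : 0 < n ->
  forall q2 : {perm 'I_n},
    in_DX (rev_compl A) q2 <->
    exists2 q1 : {perm 'I_n}, in_DX A q1 & q2 = rename_rev (dual_order q1).
Proof.
move=> _ q2; split=> [DXq2 | [q1 DXq1 ->]].
- exists (dual_rev q2); last by rewrite -[LHS]dual_revK.
  by rewrite -in_DX_dual_revE dual_revK.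
- exact: in_DX_dual_rev.
Qed.
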